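(* Every $\frac{\kappa+1}{\kappa}$-APLS for the maximum matching problem on graphs of odd-girth at least $2\kappa+1$ has proof size $\Omega(\log\kappa)$.
   Context: All graphs are finite, connected and undirected, $G=(V,E)$, $N(v)$ is the set of neighbors of $v$; each node distinguishes its incident edges by port numbers. An input assignment $\mathsf{I}:V\to\{0,1\}^*$ and an output assignment $\mathsf{O}:V\to\{0,1\}^*$ give each node a local input and a local output; an IO graph $\langle G,\mathsf I,\mathsf O\rangle$ is a configuration graph with $S(v)=\mathsf I(v)\cdot\mathsf O(v)$. Given a universe $\mathcal U$ of configuration graphs and disjoint families $\mathcal F_Y,\mathcal F_N\subseteq\mathcal U$, a gap proof labeling scheme (GPLS) consists of a prover which, given a configuration graph in $\mathcal F_Y$, assigns a label $L(v)\in\{0,1\}^*$ to every node, and a verifier which at each node $v$ receives only $\langle S(v),L(v),L^N(v)\rangle$, where $L^N(v)$ is the vector of labels of $v$'s neighbors (indexed by port), and outputs True or False; the verifier accepts if all nodes output True and rejects otherwise. The GPLS is correct if (i) for every configuration graph in $\mathcal F_Y$ the verifier accepts under the prover's labels, and (ii) for every configuration graph in $\mathcal F_N$ the verifier rejects under every label assignment. Its proof size is the maximum label length assigned by the prover over configuration graphs in $\mathcal F_Y$. For an optimization problem $\Psi=\langle\Pi,f\rangle$ ($\Pi$ a set of IO graphs = feasible solutions, $f$ integer objective, $OPT_\Psi(G,\mathsf I)$ the optimum over feasible $\mathsf O$) and $\alpha\ge1$, an $\alpha$-APLS is a GPLS over $\mathcal U=\{\langle G,\mathsf I,\mathsf O\rangle:\langle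 G,\mathsf I\rangle\text{ admits a feasible solution}\}$ with $\mathcal F_Y$ the IO graphs in $\Pi$ with $f=OPT_\Psi$, and $\mathcal F_N$ equal to $\mathcal U$ minus the IO graphs in $\Pi$ with $f\ge OPT_\Psi/\alpha$ (for a maximization problem). Restricting to a graph family means the universe contains only IO graphs whose underlying graph lies in the family. Maximum matching: the output encodes a set $M\subseteq E$ (each node knows which incident edge, if any, is in $M$); feasible iff $M$ is a matching; $f=|M|$ is maximized. The odd-girth of a graph is the length of its shortest odd cycle ($\infty$ if none). *)

From mathcomp Require Import all_boot.
Set Implicit Arguments. Unset Strict Implicit. Unset Printing Implicit Defensive.

(* A port-numbered graph on nodes 'I_n is given by adjacency lists:
   adj v is the list of neighbours of v, port p of v leads to
   nth v (adj v) p. *)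
Definition adjrel (n : nat) (adj : 'I_n -> seq 'I_n) : rel 'I_n :=
  fun x y => y \in adj x.

Definition is_graph (n : nat) (adj : 'I_n -> seq 'I_n) : Prop :=
  [/\ 0 < n,
      forall v, uniq (adj v),
      forall v, v \notin adj v,
      forall u v, (v \in adj u) = (u \in adj v)
    & forall u v, connect (adjrel adj) u v].

(* odd-girth (length of a shortest odd cycle, infinity if none) >= g:
   every odd cycle (sequence of >= 3 distinct vertices, consecutive ones
   adjacent, last adjacent to first) has length >= g. *)
Definition odd_girth_ge (n : nat) (adj : 'I_n -> seq 'I_n) (g : nat) : Prop :=
  forall c : seq 'I_n, uniq c -> cycle (adjrel adj) c ->
    odd (size c) -> 3 <= size c -> g <= size c.

(* Output of a node: None (no incident matching edge) or Some p
   (the edge at port p is in M). *)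
Definition output (n : nat) := 'I_n -> option nat.

Definition points (n : nat) (adj : 'I_n -> seq 'I_n) (O : output n)
    (u v : 'I_n) : bool :=
  if O u is Some p then (p < size (adj u)) && (nth u (adj u) p == v) else false.

(* The output encodes a set M of edges which is a matching (consistent
   encoding: each node names its unique M-edge, if any). *)
Definition feasible (n : nat) (adj : 'I_n -> seq 'I_n) (O : output n) : Prop :=
  (forall u p, O u = Some p -> p < size (adj u)) /\
  (forall u v, points adj O u v -> points adj O v u).

Definition msize (n : nat) (adj : 'I_n -> seq 'I_n) (O : output n) : nat :=
  #|[set e : 'I_n * 'I_n | (e.1 < e.2)%N && points adj O e.1 e.2]|.

Definition yes_inst (n : nat) (adj : 'I_n -> seq 'I_n) (O : output n) : Prop :=
  feasible adj O /\ forall O', feasible adj O' -> msize adj O' <= msize adj O.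

(* complement of F_N : feasible with |M| >= OPT / alpha, alpha = (k+1)/k,
   i.e. (k+1) |M| >= k * OPT *)
Definition approx_ok (k : nat) (n : nat) (adj : 'I_n -> seq 'I_n) (O : output n)
  : Prop :=
  feasible adj O /\
  forall O', feasible adj O' -> k * msize adj O' <= k.+1 * msize adj O.

(* Verifier: sees S(v) = O(v), its own label, and the labels of its
   neighbours indexed by port. *)
Definition verifier := option nat -> seq bool -> seq (seq bool) -> bool.

Definition prover :=
  forall (n : nat) (adj : 'I_n -> seq 'I_n) (O : output n), 'I_n -> seq bool.

Definition accepts (Vf : verifier) (n : nat) (adj : 'I_n -> seq 'I_n)
    (O : output n) (L : 'I_n -> seq bool) : Prop :=
  forall v, Vf (O v) (L v) (map L (adj v)).

(* universe: graphs of odd-girth >= 2k+1 (every graph admits the empty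
   matching, so every IO graph is in the universe) *)
Definition in_universe (k : nat) (n : nat) (adj : 'I_n -> seq 'I_n) : Prop :=
  is_graph adj /\ odd_girth_ge adj (2 * k + 1).

Definition is_APLS (k : nat) (P : prover) (Vf : verifier) : Prop :=
  forall n (adj : 'I_n -> seq 'I_n) (O : output n), in_universe k adj ->
    (yes_inst adj O -> accepts Vf adj O (P n adj O)) /\
    (~ approx_ok k adj O -> forall L, ~ accepts Vf adj O L).

Definition proof_size_le (k : nat) (P : prover) (s : nat) : Prop :=
  forall n (adj : 'I_n -> seq 'I_n) (O : output n), in_universe k adj ->
    yes_inst adj O -> forall v, size (P n adj O v) <= s.

From mathcomp Require Import all_boot zify.
Set Implicit Arguments. Unset Strict Implicit. Unset Printing Implicit Defensive.

(* The odd cycle C_(2k+1) is in the universe, and the matching leaving only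
   the node 2k unmatched is maximum, so the prover labels it with labels of
   length <= s that every node accepts.  Each node i sees the pair of labels
   on the edge {i, i+1}; there are fewer than 2^(2s+2) such pairs.  Walking
   once around C_(2k+1) from the unmatched node and cutting loops between
   repeated pairs (closed_chain_shorten) gives a closed walk of length
   l <= 2^(2s+2) along which consecutive label pairs agree.  Unrolling it
   four times gives the even cycle C_(4l), still in the universe, whose
   nodes see exactly what some node of C_(2k+1) saw, so the verifier
   accepts (accepts_pullback).  But the pulled-back matching leaves two
   nodes unmatched while C_(4l) has a perfect matching, which is not a
   (k+1)/k-approximation unless k < 2l.  Hence k < 2^(2s+3). *)

(* The cycle C_m on the nodes 'I_m: port 0 leads to the successor, port 1
   to the predecessor. *)
Definition cycle_adj (m : nat) (i : 'I_m) : seq 'I_m := [:: ordS i; ord_pred i].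

Lemma val_ordS m (i : 'I_m) : val (ordS i) = if i.+1 == m then 0 else i.+1.
Proof.
rewrite /=; case: eqP => [->|ne]; first by rewrite modnn.
by rewrite modn_small //; have := ltn_ord i; lia.
Qed.

Lemma val_ord_pred m (i : 'I_m) :
  val (ord_pred i) = if i == 0 :> nat then m.-1 else i.-1.
Proof.
rewrite /=; have := ltn_ord i; case: eqP => [->|ne] H.
  by rewrite add0n modn_small //; lia.
have -> : (i + m).-1 = i.-1 + m by lia.
by rewrite modnDr modn_small //; lia.
Qed.

Lemma val_iter_ordS m (u : 'I_m) j : val (iter j (@ordS m) u) = (u + j) %% m.
Proof.
elim: j => [|j IH]; first by rewrite addn0 modn_small.
by rewrite iterS /= IH -[in LHS]addn1 modnDml -addnA addn1.
Qed.

Lemma cycle_is_graph m : 2 < m -> is_graph (@cycle_adj m).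
Proof.
move=> m3; split.
- lia.
- move=> v; rewrite /cycle_adj /= andbT inE -(inj_eq val_inj) val_ordS val_ord_pred.
  case: v => v hv /=; repeat case: ifP; move=> *; lia.
- move=> v; rewrite /cycle_adj !inE -!(inj_eq val_inj) val_ordS val_ord_pred.
  case: v => v hv /=; repeat case: ifP; move=> *; lia.
- move=> u v; rewrite /cycle_adj !inE -!(inj_eq val_inj) !val_ordS !val_ord_pred.
  case: v => v hv; case: u => u hu /=; repeat case: ifP; move=> *; lia.
- move=> u v.
  have reach j : connect (adjrel (@cycle_adj m)) u (iter j (@ordS m) u).
    elim: j => [|j IH]; first exact: connect0.
    apply: connect_trans IH _; apply: connect1.
    by rewrite /adjrel /cycle_adj iterS inE eqxx.
  have -> : v = iter (v + m - u) (@ordS m) u.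
    apply: val_inj; rewrite val_iter_ordS.
    have -> : u + (v + m - u) = v + m by have := ltn_ord u; lia.
    by rewrite modnDr modn_small.
  exact: reach.
Qed.

Lemma cycle_walk_winding m (x : 'I_m) p : path (adjrel (@cycle_adj m)) x p ->
  exists pc qc, pc + qc = size p /\ last x p + qc = x + pc %[mod m].
Proof.
elim: p x => [|y p IH] x /=; first by move=> _; exists 0, 0.
case/andP=> exy /IH [pc [qc [Hs Hm]]].
have m0 : 0 < m by have := ltn_ord x; lia.
move: exy; rewrite /adjrel /cycle_adj !inE => /orP [] /eqP ey.
- exists pc.+1, qc; split; first by lia.
  by rewrite Hm ey /= modnDml addSnnS.
- exists pc, qc.+1; split; first by lia.
  have -> : last y p + qc.+1 = (last y p + qc) + 1 by lia.
  rewrite -[LHS]modnDml Hm modnDml ey /= -addnA modnDml.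
  have -> : (x + m).-1 + (pc + 1) = (x + pc) + m by lia.
  by rewrite modnDr.
Qed.

(* If a closed walk makes pc forward and qc backward steps with pc + qc
   odd, then qc - pc is an odd multiple of m: m is odd and m <= pc + qc. *)
Lemma odd_winding m pc qc :
  qc = pc %[mod m] -> odd (pc + qc) -> odd m /\ m <= pc + qc.
Proof.
wlog le : pc qc / pc <= qc.
  move=> W H1 H2; case: (leqP pc qc) => h; first exact: W.
  by rewrite addnC; apply: W; rewrite 1?addnC //; exact: ltnW.
move=> /eqP; rewrite eqn_mod_dvd // => dv od.
have oddd : odd (qc - pc) by rewrite oddB // addbC -oddD.
have d0 : 0 < qc - pc by case: (qc - pc) oddd.
split; first exact: dvdn_odd dv oddd.
by have := dvdn_leq d0 dv; lia.
Qed.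

Lemma cycle_odd_girth m g : (odd m -> g <= m) -> odd_girth_ge (@cycle_adj m) g.
Proof.
move=> Hg [|x p] _ //= cyc od _.
have [pc [qc [Hs Hm]]] := cycle_walk_winding cyc.
move: Hm; rewrite last_rcons => /eqP; rewrite eqn_modDl => /eqP Hm.
rewrite size_rcons in Hs.
have [|om le] := odd_winding Hm; first by rewrite Hs.
by apply: leq_trans (Hg om) _; rewrite -Hs.
Qed.

Lemma cycle_in_universe k m :
  2 < m -> (odd m -> 2 * k + 1 <= m) -> in_universe k (@cycle_adj m).
Proof. by move=> m3 Hg; split; [exact: cycle_is_graph | exact: cycle_odd_girth]. Qed.

Section Matching.
Variables (n : nat) (adj : 'I_n -> seq 'I_n) (O : output n).

Lemma points_fun u v w : points adj O u v -> points adj O u w -> v = w.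
Proof. by rewrite /points; case: (O u) => // p /andP [_ /eqP <-] /andP [_ /eqP <-]. Qed.

Lemma points_matched u v : points adj O u v -> O u != None.
Proof. by rewrite /points; case: (O u). Qed.

Lemma points_adj u v : points adj O u v -> v \in adj u.
Proof. by rewrite /points; case: (O u) => // p /andP [lt /eqP <-]; exact: mem_nth. Qed.

Hypothesis feas : feasible adj O.
Hypothesis irr : forall v, v \notin adj v.

Lemma matched_points u : O u != None -> exists v, points adj O u v.
Proof.
case E: (O u) => [p|] // _; exists (nth u (adj u) p).
by rewrite /points E (feas.1 _ _ E) eqxx.
Qed.

Lemma points_neq u v : points adj O u v -> u != v.
Proof. by move=> /points_adj; apply: contraL => /eqP ->; exact: irr. Qed.

(* Each edge of M covers exactly two matched nodes, its smaller and its
   larger end: 2|M| is the number of matched nodes. *)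
Lemma msize_matched : 2 * msize adj O = #|[set v | O v != None]|.
Proof.
rewrite /msize; set E := [set e : 'I_n * 'I_n | _].
have inE' e : (e \in E) = (e.1 < e.2) && points adj O e.1 e.2 by rewrite inE.
have -> : [set v | O v != None] = (fst @: E) :|: (snd @: E).
  apply/setP => v; rewrite !inE; apply/idP/idP.
  - move=> /matched_points [w pvw].
    have pwv := feas.2 _ _ pvw.
    have := points_neq pvw; rewrite neq_ltn => /orP [lt|lt].
    + by apply/orP; left; apply/imsetP; exists (v, w) => //; rewrite inE' lt pvw.
    + by apply/orP; right; apply/imsetP; exists (w, v) => //; rewrite inE' lt pwv.
  - case/orP => /imsetP [[a b] /=]; rewrite inE' /= => /andP [_ pab] ->.
    + exact: points_matched pab.
    + exact: points_matched (feas.2 _ _ pab).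
have disj : fst @: E :&: snd @: E = set0.
  apply/setP => v; rewrite !inE; apply/negP => /andP [/imsetP [[a b] /=]].
  rewrite inE' /= => /andP [lab pab] ->.
  case/imsetP => [[c d]]; rewrite inE' /= => /andP [lcd pcd] eb; subst d.
  have eb := points_fun pab (feas.2 _ _ pcd); subst b.
  by move: (ltn_trans lab lcd); rewrite ltnn.
rewrite cardsU disj cards0 subn0 !card_in_imset; first by rewrite mul2n addnn.
- move=> [a b] [c d]; rewrite !inE' /= => /andP [_ pab] /andP [_ pcd] ebd; subst d.
  by rewrite (points_fun (feas.2 _ _ pab) (feas.2 _ _ pcd)).
- move=> [a b] [c d]; rewrite !inE' /= => /andP [_ pab] /andP [_ pcd] eac; subst c.
  by rewrite (points_fun pab pcd).
Qed.

Lemma msize_unmatched (A : {set 'I_n}) :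
  {in A, forall v, O v = None} -> 2 * msize adj O + #|A| <= n.
Proof.
move=> unA; rewrite msize_matched.
have sub : [set v | O v != None] \subset ~: A.
  by apply/subsetP => v; rewrite !inE; apply: contra => /unA ->.
apply: (@leq_trans (#|~: A| + #|A|)); first by rewrite leq_add2r subset_leq_card.
by rewrite addnC cardsC card_ord.
Qed.

End Matching.

Lemma cycle_irreflexive m : 2 < m -> forall v : 'I_m, v \notin cycle_adj v.
Proof. by move=> m3; case: (cycle_is_graph m3). Qed.

Lemma cycle_points m (O : output m) u v :
  points (@cycle_adj m) O u v =
  ((O u == Some 0) && (v == ordS u)) || ((O u == Some 1) && (v == ord_pred u)).
Proof.
by rewrite /points; case: (O u) => [[|[|p]]|] //=; rewrite ?orbF // eq_sym.
Qed.

Lemma cycle_feasible m (O : output m) :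
  (forall u p, O u = Some p -> p < 2) ->
  (forall u, O u = Some 0 -> O (ordS u) = Some 1) ->
  (forall u, O u = Some 1 -> O (ord_pred u) = Some 0) ->
  feasible (@cycle_adj m) O.
Proof.
move=> H1 H2 H3; split; first exact: H1.
move=> u v; rewrite !cycle_points => /orP [] /andP [/eqP Ou /eqP ->].
- by rewrite (H2 _ Ou) ordSK eqxx /= ?orbT.
- by rewrite (H3 _ Ou) ord_predK eqxx /= eqxx.
Qed.

Definition perfect_matching m : output m :=
  fun i => if odd i then Some 1 else Some 0.
Arguments perfect_matching : clear implicits.

Lemma perfect_matching_feasible m :
  ~~ odd m -> feasible (@cycle_adj m) (perfect_matching m).
Proof.
move=> em; apply: cycle_feasible.
- by move=> u p; rewrite /perfect_matching; case: ifP => _ [<-].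
- move=> u; rewrite /perfect_matching; case: ifP => // ou _.
  rewrite val_ordS; case: eqP => [e|_]; last by rewrite /= ou.
  by move: em; rewrite -e /= ou.
- move=> u; rewrite /perfect_matching; case: ifP => // ou _.
  rewrite val_ord_pred; case: eqP => [e|_]; first by move: ou; rewrite e.
  by move: ou; case: (nat_of_ord u) => // j /=; case: (odd j).
Qed.

Lemma perfect_matching_msize m :
  ~~ odd m -> 2 < m -> 2 * msize (@cycle_adj m) (perfect_matching m) = m.
Proof.
move=> em m3.
rewrite (msize_matched (perfect_matching_feasible em) (cycle_irreflexive m3)).
have -> : [set v | perfect_matching m v != None] = setT.
  by apply/setP => v; rewrite !inE /perfect_matching; case: ifP.
by rewrite cardsT card_ord.
Qed.

Definition near_perfect k : output (2 * k).+1 :=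
  fun i => if val i == 2 * k then None else if odd (val i) then Some 1 else Some 0.
Arguments near_perfect : clear implicits.

Lemma near_perfect_step k (i : 'I_(2 * k).+1) :
  (near_perfect k i == Some 0) = (near_perfect k (ordS i) == Some 1).
Proof.
rewrite /near_perfect val_ordS; case: i => j hj /=.
case: (eqVneq j (2 * k)) => [->|ne]; first by rewrite eqxx; case: ifP.
have -> : (j.+1 == (2 * k).+1) = false by apply/eqP; lia.
case: (eqVneq j.+1 (2 * k)) => [e|_]; last by rewrite /=; case: (odd j).
have : odd j.+1 = odd (2 * k) by rewrite e.
by rewrite oddM /=; case: (odd j).
Qed.

Lemma near_perfect_feasible k : feasible (@cycle_adj (2 * k).+1) (near_perfect k).
Proof.
apply: cycle_feasible.
- by move=> u p; rewrite /near_perfect; case: ifP => // _; case: ifP => _ [<-].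
- by move=> u /eqP; rewrite near_perfect_step => /eqP.
- by move=> u h; apply/eqP; rewrite near_perfect_step ord_predK; exact/eqP.
Qed.

(* near_perfect k has k edges, which is optimal on 2k+1 nodes. *)
Lemma near_perfect_yes k : 0 < k -> yes_inst (@cycle_adj (2 * k).+1) (near_perfect k).
Proof.
move=> k0; have m3 : 2 < (2 * k).+1 by lia.
have irr := cycle_irreflexive m3.
have feas := near_perfect_feasible k.
split=> // O' feas'.
have un0 : {in set0, forall v, O' v = None} by move=> v; rewrite inE.
have := msize_unmatched feas' irr un0.
have := msize_matched feas irr.
have -> : [set v | near_perfect k v != None] = [set~ ord_max].
  apply/setP => v; rewrite !inE /near_perfect -(inj_eq val_inj) /=.
  by case: ifP => //; case: ifP.
by rewrite cards0 cardsC1 card_ord; lia.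
Qed.

(* Call w a chain of length n if R (w i) = Lf (w i.+1) for
   all i < n.  If R takes its values in a list U, a closed chain at x0 can
   be shortened to a closed chain at x0 of length at most size U: two
   positions i < j < n with R (w i) = R (w j) let us jump from w i directly
   to w j.+1, dropping the loop in between. *)
Lemma closed_chain_shorten (T : Type) (X : eqType) (R Lf : T -> X) (U : seq X)
    (x0 : T) :
  (forall t, R t \in U) ->
  forall n w, 0 < n -> w 0 = x0 -> w n = x0 ->
    (forall i, i < n -> R (w i) = Lf (w i.+1)) ->
  exists n' (w' : nat -> T), [/\ 0 < n', n' <= size U, w' 0 = x0, w' n' = x0
     & forall i, i < n' -> R (w' i) = Lf (w' i.+1)].
Proof.
move=> RU n; elim: n {-2}n (leqnn n) => [|N IH] n Hn w n0 w0 wn ws; first by lia.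
case: (leqP n (size U)) => hU; first by exists n, w.
set xs := map (fun i => R (w i)) (iota 0 n).
have : ~~ uniq xs.
  have sub : {subset xs <= U} by move=> x /mapP [i _ ->].
  apply/negP => u; have := uniq_leq_size u sub.
  by rewrite size_map size_iota; lia.
case/(uniqPn (R x0)) => i [j [lij]]; rewrite size_map size_iota => ljn.
have hi : i < size (iota 0 n) by rewrite size_iota; lia.
have hj : j < size (iota 0 n) by rewrite size_iota.
rewrite /xs (nth_map 0 _ _ hi) (nth_map 0 _ _ hj) !nth_iota ?add0n //; last by lia.
move=> eqR.
pose w' p := if p <= i then w p else w (p + (j - i)).
apply: (IH (n - (j - i)) _ w'); rewrite /w' ?leq0n //.
- by lia.
- by lia.
- by rewrite ifN; [have -> : n - (j - i) + (j - i) = n by lia | lia].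
- move=> p hp; case: (ltngtP p i) => hpi.
  + by apply: ws; lia.
  + by rewrite addSn; apply: ws; lia.
  + subst p; have -> : i.+1 + (j - i) = j.+1 by lia.
    by rewrite eqR; apply: ws; lia.
Qed.

Lemma wrap_closed_walk (T : Type) (e : T -> T -> Prop) l (w : nat -> T) m :
  0 < l -> l %| m -> w 0 = w l -> (forall i, i < l -> e (w i) (w i.+1)) ->
  forall v : 'I_m, e (w (v %% l)) (w (ordS v %% l)).
Proof.
move=> l0 dvd wl ws v.
have wrap r : r < l -> w (r.+1 %% l) = w r.+1.
  move=> rl; case: (ltngtP r.+1 l) => h; first by rewrite modn_small.
  - by lia.
  - by rewrite h modnn wl.
have succ x : x.+1 %% l = (x %% l).+1 %% l by rewrite -[x.+1]addn1 -modnDml addn1.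
rewrite /= (modn_dvdm _ dvd) succ wrap; last exact: ltn_pmod.
by apply: ws; exact: ltn_pmod.
Qed.

Definition unroll (X : Type) (l : nat) (w : nat -> X) (v : 'I_(4 * l)) : X :=
  w (v %% l).

(* The verifier only sees a node's output, its label and its neighbours'
   labels. *)
Lemma accepts_pullback (Vf : verifier) m m' (O : output m) (L : 'I_m -> seq bool)
    (phi : 'I_m' -> 'I_m) :
  (forall v, L (ordS (phi v)) = L (phi (ordS v))) ->
  (forall v, L (ord_pred (phi v)) = L (phi (ord_pred v))) ->
  accepts Vf (@cycle_adj m) O L ->
  accepts Vf (@cycle_adj m') (fun v => O (phi v)) (fun v => L (phi v)).
Proof. by move=> Hs Hp acc v; have := acc (phi v); rewrite /= Hs Hp. Qed.

Definition edge_labels m (L : 'I_m -> seq bool) (i : 'I_m) := (L i, L (ordS i)).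

Lemma unrolled_accepted (Vf : verifier) m (O : output m) (L : 'I_m -> seq bool)
    l (w : nat -> 'I_m) :
  0 < l -> w 0 = w l ->
  (forall i, i < l -> edge_labels L (w i) = edge_labels L (ord_pred (w i.+1))) ->
  accepts Vf (@cycle_adj m) O L ->
  accepts Vf (@cycle_adj (4 * l)) (fun v => O (unroll w v)) (fun v => L (unroll w v)).
Proof.
move=> l0 wl ws; have dvd : l %| 4 * l by exact: dvdn_mull.
have glue := wrap_closed_walk
  (e := fun x y => edge_labels L x = edge_labels L (ord_pred y)) l0 dvd wl ws.
apply: accepts_pullback => v.
- by have /= := congr1 snd (glue v); rewrite (ord_predK (w _)).
- by have := congr1 fst (glue (ord_pred v)); rewrite (ord_predK v).
Qed.

(* Unrolling into C_(4l) a closed walk of C_(2k+1) based at its unmatched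
   node leaves nodes 0 and l unmatched, so at most 2l - 1 edges against the
   perfect matching's 2l: a (k+1)/k-approximation forces l to be large. *)
Lemma unrolled_approx k l (w : nat -> 'I_(2 * k).+1) : 0 < l -> w 0 = ord_max ->
  approx_ok k (@cycle_adj (4 * l)) (fun v => near_perfect k (unroll w v)) ->
  k < 2 * l.
Proof.
move=> l0 w0 [feas ratio].
have m3 : 2 < 4 * l by lia.
have even : ~~ odd (4 * l) by rewrite oddM.
have opt := ratio _ (perfect_matching_feasible even).
have two_perfect := perfect_matching_msize even m3.
have node0 : 0 < 4 * l by lia.
have nodel : l < 4 * l by lia.
set A := [set Ordinal node0; Ordinal nodel].
have unA : {in A, forall v, near_perfect k (unroll w v) = None}.
  move=> v; rewrite !inE => /orP [] /eqP ->;
    by rewrite /unroll /= ?mod0n ?modnn w0 /near_perfect /= eqxx.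
have := msize_unmatched feas (cycle_irreflexive m3) unA.
rewrite cards2 -(inj_eq val_inj) /= neq_ltn l0.
by move: opt two_perfect; nia.
Qed.

Fixpoint bitstrings (s : nat) : seq (seq bool) :=
  if s is s'.+1 then [::] :: [seq b :: l | b <- [:: true; false], l <- bitstrings s']
  else [:: [::]].

Lemma mem_bitstrings s l : size l <= s -> l \in bitstrings s.
Proof.
elim: s l => [|s IH] [|b l] //= hl.
rewrite inE; apply/orP; right; rewrite !mem_cat.
by case: b; rewrite map_f ?orbT //; apply: IH.
Qed.

Lemma size_bitstrings s : size (bitstrings s) < 2 ^ s.+1.
Proof. by elim: s => [|s IH] //=; rewrite !size_cat !size_map /= expnS; lia. Qed.

Definition label_pairs (s : nat) : seq (seq bool * seq bool) :=
  [seq (a, b) | a <- bitstrings s, b <- bitstrings s].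

Lemma size_label_pairs s : size (label_pairs s) < 2 ^ (2 * s).+2.
Proof.
rewrite size_allpairs; have := size_bitstrings s.
have -> : (2 * s).+2 = s.+1 + s.+1 by lia.
by rewrite expnD; move: (2 ^ s.+1) => t; nia.
Qed.

Section LowerBound.
Variables (k : nat) (P : prover) (Vf : verifier) (s : nat).
Hypotheses (k_gt0 : 0 < k) (apls : is_APLS k P Vf) (size_le : proof_size_le k P s).

Let L := @P _ (@cycle_adj (2 * k).+1) (near_perfect k).

Lemma near_perfect_universe : in_universe k (@cycle_adj (2 * k).+1).
Proof. by apply: cycle_in_universe; lia. Qed.

Lemma short_label_walk : exists l (w : nat -> 'I_(2 * k).+1),
  [/\ 0 < l, l <= size (label_pairs s), w 0 = ord_max, w l = ord_max
    & forall i, i < l -> edge_labels L (w i) = edge_labels L (ord_pred (w i.+1))].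
Proof.
have yes := near_perfect_yes k_gt0.
have inU t : edge_labels L t \in label_pairs s.
  by apply/allpairsP; exists (edge_labels L t);
    rewrite !mem_bitstrings ?(size_le near_perfect_universe yes).
have around : iter (2 * k).+1 (@ordS _) (@ord_max (2 * k)) = ord_max.
  by apply: val_inj; rewrite val_iter_ordS /= modnDr modn_small.
apply: (closed_chain_shorten (Lf := fun t => edge_labels L (ord_pred t)) inU
  (w := fun p => iter p (@ordS _) ord_max) (ltn0Sn _) (erefl _) around) => i _.
by rewrite iterS ordSK.
Qed.

(* If the labels were too short, the unrolled cycle would be accepted
   although its matching is not a (k+1)/k-approximation. *)
Lemma label_pairs_bound : k < 2 * size (label_pairs s).
Proof.
have [l [w [l0 lU w0 wl ws]]] := short_label_walk.
have yes := near_perfect_yes k_gt0.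
have acc := (@apls _ _ _ near_perfect_universe).1 yes.
have acc' := unrolled_accepted l0 (etrans w0 (esym wl)) ws acc.
have univ : in_universe k (@cycle_adj (4 * l)).
  by apply: cycle_in_universe; rewrite ?oddM; lia.
rewrite ltnNge; apply/negP => small.
apply: (@apls _ _ _ univ).2 _ _ acc' => approx.
by have := unrolled_approx l0 w0 approx; lia.
Qed.

End LowerBound.

Theorem theorem5p17 :
  exists c k0 : nat, forall k : nat, 0 < k -> k0 <= k ->
    forall (P : prover) (Vf : verifier) (s : nat),
      is_APLS k P Vf -> proof_size_le k P s ->
      trunc_log 2 k <= c * s.
Proof.
exists 4, 8 => k k0 k8 P Vf s apls size_le.
have k_small : k < 2 ^ (2 * s).+3.
  have := label_pairs_bound k0 apls size_le; have := size_label_pairs s.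
  by rewrite [2 ^ _.+3]expnS; lia.
have s0 : 0 < s by rewrite lt0n; apply: contraTneq k_small => ->; rewrite -leqNgt.
(* k < 2^(2s+3) gives log2 k <= 2s+2 <= 4s once s > 0, forced by k >= 8. *)
have : trunc_log 2 k < (2 * s).+3.
  by rewrite -(ltn_exp2l _ _ (ltnSn 1)); apply: leq_ltn_trans (trunc_logP _ _) k_small.
by lia.
Qed.
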